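(* Consider the delay differential system \[ \begin{aligned} \dot T(t)&= s-dT(t)+aT(t)\Big(1-\frac{T(t)+I(t)}{T_{\max}}\Big)-\frac{bT(t)V(t)}{1+\alpha V(t)},\\ \dot I(t)&= \frac{bT(t-\tau)V(t-\tau)}{1+\alpha V(t-\tau)}+aI(t)\Big(1-\frac{T(t)+I(t)}{T_{\max}}\Big)-\mu I(t),\\ \dot V(t)&= pI(t)-cV(t), \end{aligned} \] with positive constants $s,d,a,T_{\max},b,\alpha,\mu,p,c$ and $\tau\ge0$. Let \[ T_0=\frac{T_{\max}}{2a}\Big(a-d+\sqrt{(a-d)^2+\tfrac{4as}{T_{\max}}}\Big),\qquad R_0=\frac{1}{\mu}\Big[\frac{bpT_0}{c}+a\Big(1-\frac{T_0}{T_{\max}}\Big)\Big]. \] Assume $d=\mu$ and $R_0>1$. Then the infected equilibrium $E_2=(T_2,I_2,V_2)$ (the unique equilibrium with all components positive) is globally asymptotically stable (with respect to solutions with positive initial data) for any $\tau\ge0$. *)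

From Stdlib Require Import Reals Lra.
From Coquelicot Require Import Coquelicot.
Open Scope R_scope.

Definition fT (s d a Tmax b alpha : R) (T I V : R) : R :=
  s - d * T + a * T * (1 - (T + I) / Tmax) - b * T * V / (1 + alpha * V).

(* Right-hand side of the I-equation; Td, Vd are the delayed values T(t-tau), V(t-tau). *)
Definition fI (a Tmax b alpha mu : R) (Td Vd T I : R) : R :=
  b * Td * Vd / (1 + alpha * Vd) + a * I * (1 - (T + I) / Tmax) - mu * I.

Definition fV (p c : R) (I V : R) : R := p * I - c * V.

Definition T0 (s d a Tmax : R) : R :=
  Tmax / (2 * a) * (a - d + sqrt ((a - d) ^ 2 + 4 * a * s / Tmax)).

Definition basic_R0 (s d a Tmax b mu p c : R) : R :=
  / mu * (b * p * T0 s d a Tmax / c + a * (1 - T0 s d a Tmax / Tmax)).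

Definition is_equilibrium (s d a Tmax b alpha mu p c : R) (T I V : R) : Prop :=
  fT s d a Tmax b alpha T I V = 0 /\
  fI a Tmax b alpha mu T V T I = 0 /\
  fV p c I V = 0.

(* The functions are total on R; only their values on [-tau, +oo) matter.
   Continuity everywhere is harmless (any continuous function on [-tau,+oo)
   extends continuously to R). The equations hold for every t > 0. *)
Definition is_solution (s d a Tmax b alpha mu p c tau : R) (T I V : R -> R) : Prop :=
  (forall t, continuous T t /\ continuous I t /\ continuous V t) /\
  (forall t, 0 < t ->
     is_derive T t (fT s d a Tmax b alpha (T t) (I t) (V t)) /\
     is_derive I t (fI a Tmax b alpha mu (T (t - tau)) (V (t - tau)) (T t) (I t)) /\
     is_derive V t (fV p c (I t) (V t))).

Definition positive_initial_data (tau : R) (T I V : R -> R) : Prop :=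
  forall th, - tau <= th <= 0 -> 0 < T th /\ 0 < I th /\ 0 < V th.

Definition dist3 (x1 y1 z1 x2 y2 z2 : R) : R :=
  Rmax (Rabs (x1 - x2)) (Rmax (Rabs (y1 - y2)) (Rabs (z1 - z2))).

(* Lyapunov stability of (T2,I2,V2) w.r.t. solutions with positive initial data,
   phase space C([-tau,0], R^3) with the sup norm. *)
Definition locally_stable (s d a Tmax b alpha mu p c tau : R) (T2 I2 V2 : R) : Prop :=
  forall eps, 0 < eps -> exists delta, 0 < delta /\
    forall T I V : R -> R,
      is_solution s d a Tmax b alpha mu p c tau T I V ->
      positive_initial_data tau T I V ->
      (forall th, - tau <= th <= 0 -> dist3 (T th) (I th) (V th) T2 I2 V2 < delta) ->
      forall t, 0 <= t -> dist3 (T t) (I t) (V t) T2 I2 V2 < eps.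

Definition globally_attractive (s d a Tmax b alpha mu p c tau : R) (T2 I2 V2 : R) : Prop :=
  forall T I V : R -> R,
    is_solution s d a Tmax b alpha mu p c tau T I V ->
    positive_initial_data tau T I V ->
    is_lim T p_infty T2 /\ is_lim I p_infty I2 /\ is_lim V p_infty V2.

Definition globally_asymptotically_stable (s d a Tmax b alpha mu p c tau : R)
  (T2 I2 V2 : R) : Prop :=
  locally_stable s d a Tmax b alpha mu p c tau T2 I2 V2 /\
  globally_attractive s d a Tmax b alpha mu p c tau T2 I2 V2.

From Stdlib Require Import Reals Lra Psatz Classical.
From Coquelicot Require Import Coquelicot.
Open Scope R_scope.

(* With phi z = z - 1 - ln z, beta = b T V / (1 + alpha V) and B2 = beta at E2, the
   functional
     L = T2 phi(T/T2) + I2 phi(I/I2) + B2/(p I2) V2 phi(V/V2)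
         + B2 * int_{t-tau}^t phi(beta(th)/B2) dth
   satisfies L' <= -Q along positive solutions, Q being a sum of squares in T - T2,
   T + I - T2 - I2 and V - V2: after substituting the equilibrium relations (d = mu makes
   the logistic terms collapse into -(a/K)(T + I - T2 - I2)^2), the logarithms telescope
   and ln x <= x - 1 bounds the rest. Since L dominates each component both from above and
   away from 0, solutions stay positive and bounded, so their derivatives are bounded and
   a Barbalat argument turns L >= 0, L' <= -Q into convergence to E2. Stability follows
   from L(t) <= L(0), L(0) being small for histories near E2. Equilibria are explicit:
   adding the T- and I-equations gives a logistic equation for T + I, pinning T + I = T0. *)

Ltac pos := repeat (first [lra | apply Rmult_lt_0_compat | apply Rdiv_lt_0_compat
  | apply Rinv_0_lt_compat | apply Rplus_lt_0_compat]); try nra.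
Ltac nonzero := repeat split; apply Rgt_not_eq; pos.

Lemma ln_le_sub1 x : 0 < x -> ln x <= x - 1.
Proof.
  intros hx. destruct (Req_dec (ln x) 0) as [h0 | h0].
  - assert (x = 1) by (rewrite <- (exp_ln x hx), h0; apply exp_0). lra.
  - pose proof (exp_ineq1 _ h0) as h. rewrite exp_ln in h; lra.
Qed.

Lemma ln_lt_sub1 x : 0 < x -> x <> 1 -> ln x < x - 1.
Proof.
  intros hx hx1. pose proof (exp_ineq1 _ (ln_neq_0 x hx1 hx)) as h.
  rewrite exp_ln in h; lra.
Qed.

Lemma ln_ge_1_sub_inv x : 0 < x -> 1 - / x <= ln x.
Proof.
  intros hx. pose proof (ln_le_sub1 (/ x) (Rinv_0_lt_compat _ hx)) as h.
  rewrite ln_Rinv in h by lra. lra.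
Qed.

Lemma ln_le_half x : 0 < x -> ln x <= x / 2.
Proof.
  intros hx. set (r := sqrt x).
  assert (hr : 0 < r) by (apply sqrt_lt_R0; lra).
  assert (hrr : r * r = x) by (apply sqrt_sqrt; lra).
  assert (hlnx : ln x = 2 * ln r) by (rewrite <- hrr, ln_mult by lra; ring).
  pose proof (ln_le_sub1 r hr). pose proof (pow2_ge_0 (r - 2)).
  rewrite hlnx, <- hrr. nra.
Qed.

Definition volterra (z : R) : R := z - 1 - ln z.

Lemma volterra_ge0 z : 0 < z -> 0 <= volterra z.
Proof. intros hz. pose proof (ln_le_sub1 z hz). unfold volterra; lra. Qed.

Lemma volterra_gt0 z : 0 < z -> z <> 1 -> 0 < volterra z.
Proof. intros hz hz1. pose proof (ln_lt_sub1 z hz hz1). unfold volterra; lra. Qed.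

Lemma volterra_le_sqr_div z : 0 < z -> volterra z <= (z - 1) ^ 2 / z.
Proof.
  intros hz. pose proof (ln_ge_1_sub_inv z hz).
  assert ((z - 1) ^ 2 / z = z - 2 + / z) by (field; lra). unfold volterra; lra.
Qed.

Lemma volterra_le_increasing y z : 1 <= y -> y <= z -> volterra y <= volterra z.
Proof.
  intros hy hyz.
  assert (hq : ln z - ln y <= z / y - 1)
    by (rewrite <- ln_div by lra; apply ln_le_sub1, Rdiv_lt_0_compat; lra).
  assert (z / y - 1 <= z - y).
  { replace (z / y - 1) with ((z - y) / y) by (field; lra).
    apply Rmult_le_reg_r with y; [lra |]. field_simplify; nra. }
  unfold volterra; lra.
Qed.

Lemma volterra_le_decreasing y z : 0 < z -> z <= y -> y <= 1 -> volterra y <= volterra z.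
Proof.
  intros hz hzy hy.
  assert (hq : 1 - z / y <= ln y - ln z).
  { rewrite <- ln_div by lra.
    replace (z / y) with (/ (y / z)) by (field; lra).
    apply ln_ge_1_sub_inv, Rdiv_lt_0_compat; lra. }
  assert (y - z <= 1 - z / y).
  { replace (1 - z / y) with ((y - z) / y) by (field; lra).
    apply Rmult_le_reg_r with y; [lra |]. field_simplify; nra. }
  unfold volterra; lra.
Qed.

Lemma volterra_bounded_away r : 0 < r < 1 -> exists m, 0 < m /\
  forall z, 0 < z -> r <= Rabs (z - 1) -> m <= volterra z.
Proof.
  intros hr. exists (Rmin (volterra (1 + r)) (volterra (1 - r))). split.
  - apply Rmin_glb_lt; apply volterra_gt0; lra.
  - intros z hz hzr. destruct (Rle_lt_dec 1 z).
    + rewrite Rabs_right in hzr by lra.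
      eapply Rle_trans; [apply Rmin_l | apply volterra_le_increasing; lra].
    + rewrite Rabs_left in hzr by lra.
      eapply Rle_trans; [apply Rmin_r | apply volterra_le_decreasing; lra].
Qed.

Lemma continuous_volterra_comp (f : R -> R) t : continuous f t -> 0 < f t ->
  continuous (fun y => volterra (f y)) t.
Proof.
  intros hf hp. unfold volterra.
  apply (continuous_minus (fun y => f y - 1) (fun y => ln (f y))).
  - apply (continuous_minus f (fun _ => 1)); [exact hf | apply continuous_const].
  - apply continuous_comp; [exact hf | apply continuous_ln; exact hp].
Qed.

Definition volterra_at (x2 x : R) : R := x - x2 - x2 * (ln x - ln x2).

Lemma volterra_atE x2 x : 0 < x2 -> 0 < x -> volterra_at x2 x = x2 * volterra (x / x2).
Proof. intros. unfold volterra_at, volterra. rewrite ln_div by lra. field. lra. Qed.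

Lemma volterra_at_ge0 x2 x : 0 < x2 -> 0 < x -> 0 <= volterra_at x2 x.
Proof.
  intros. rewrite volterra_atE by lra.
  apply Rmult_le_pos; [lra | apply volterra_ge0, Rdiv_lt_0_compat; lra].
Qed.

Lemma volterra_at_le_upper x2 x C : 0 < x2 -> 0 < x -> volterra_at x2 x <= C ->
  x <= 2 * (C + x2).
Proof.
  intros h2 hx hC. unfold volterra_at in hC. rewrite <- ln_div in hC by lra.
  pose proof (ln_le_half (x / x2) ltac:(apply Rdiv_lt_0_compat; lra)).
  assert (x2 * ln (x / x2) <= x / 2)
    by (replace (x / 2) with (x2 * ((x / x2) / 2)) by (field; lra); nra).
  lra.
Qed.

Lemma volterra_at_le_lower x2 x C : 0 < x2 -> 0 < x -> volterra_at x2 x <= C ->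
  x2 * exp (- ((C + x2) / x2)) <= x.
Proof.
  intros h2 hx hC. unfold volterra_at in hC. rewrite <- ln_div in hC by lra.
  assert (hx2 : 0 < x / x2) by (apply Rdiv_lt_0_compat; lra).
  assert (hln : - ((C + x2) / x2) <= ln (x / x2)).
  { apply Rmult_le_reg_l with x2; [lra |].
    replace (x2 * - ((C + x2) / x2)) with (- (C + x2)) by (field; lra). lra. }
  assert (exp (- ((C + x2) / x2)) <= x / x2).
  { rewrite <- (exp_ln (x / x2)) by exact hx2.
    destruct hln as [hlt | heq]; [left; apply exp_increasing, hlt | rewrite heq; lra]. }
  replace x with (x2 * (x / x2)) by (field; lra). nra.
Qed.

Lemma volterra_at_small_close x2 eps : 0 < x2 -> 0 < eps -> exists eta, 0 < eta /\
  forall x, 0 < x -> volterra_at x2 x < eta -> Rabs (x - x2) < eps.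
Proof.
  intros h2 he. set (r := Rmin (eps / x2) (1 / 2)).
  assert (hr : 0 < r < 1).
  { split; [apply Rmin_glb_lt; pos | eapply Rle_lt_trans; [apply Rmin_r | lra]]. }
  destruct (volterra_bounded_away r hr) as [m [hm Hm]].
  exists (x2 * m). split; [pos |].
  intros x hx hlt. apply Rnot_le_lt. intros hfar.
  assert (hrz : r <= Rabs (x / x2 - 1)).
  { replace (x / x2 - 1) with ((x - x2) / x2) by (field; lra).
    unfold Rdiv. rewrite Rabs_mult, Rabs_inv, (Rabs_right x2) by lra.
    apply Rle_trans with (eps / x2); [apply Rmin_l |].
    apply Rmult_le_compat_r; [left; pos | lra]. }
  specialize (Hm (x / x2) ltac:(apply Rdiv_lt_0_compat; lra) hrz).
  rewrite volterra_atE in hlt by lra. nra.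
Qed.

Lemma volterra_at_le_near x2 x del : 0 < x2 -> 0 <= del <= 1 -> del <= x2 / 2 ->
  Rabs (x - x2) <= del -> volterra_at x2 x <= 2 / x2 * del.
Proof.
  intros h2 hdel hdel2 hx.
  assert (hsq : (x - x2) ^ 2 <= del).
  { rewrite <- pow2_abs. pose proof (Rabs_pos (x - x2)). nra. }
  apply Rabs_le_between in hx.
  rewrite volterra_atE by lra.
  pose proof (volterra_le_sqr_div (x / x2) ltac:(apply Rdiv_lt_0_compat; lra)) as hv.
  replace ((x / x2 - 1) ^ 2 / (x / x2)) with ((x - x2) ^ 2 / (x * x2)) in hv
    by (field; lra).
  assert ((x - x2) ^ 2 / (x * x2) <= 2 / x2 * del / x2).
  { apply Rmult_le_reg_r with (x * x2 * x2); [pos |].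
    field_simplify; [| lra | lra]. nra. }
  assert (x2 * (2 / x2 * del / x2) = 2 / x2 * del) by (field; lra). nra.
Qed.

Lemma volterra_at_derive x2 (f : R -> R) t df : 0 < f t -> is_derive f t df ->
  is_derive (fun y => volterra_at x2 (f y)) t ((1 - x2 / f t) * df).
Proof.
  intros hp hf.
  assert (h : is_derive (volterra_at x2) (f t) (1 - x2 / f t))
    by (unfold volterra_at; auto_derive; [lra | field; lra]).
  pose proof (is_derive_comp (volterra_at x2) f t _ _ h hf) as hc.
  replace ((1 - x2 / f t) * df) with (scal df (1 - x2 / f t)) by
    (unfold scal; simpl; unfold mult; simpl; ring).
  exact hc.
Qed.

Lemma continuous_volterra_at x2 (f : R -> R) t : continuous f t -> 0 < f t ->
  continuous (fun y => volterra_at x2 (f y)) t.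
Proof.
  intros hf hp. unfold volterra_at.
  apply (continuous_minus (fun y => f y - x2) (fun y => x2 * (ln (f y) - ln x2))).
  - apply (continuous_minus f (fun _ => x2)); [exact hf | apply continuous_const].
  - apply (continuous_mult (fun _ => x2) (fun y => ln (f y) - ln x2));
      [apply continuous_const |].
    apply (continuous_minus (fun y => ln (f y)) (fun _ => ln x2)); [| apply continuous_const].
    apply continuous_comp; [exact hf | apply continuous_ln; exact hp].
Qed.

Lemma continuous_eps_delta f x : continuous f x -> forall eps, 0 < eps ->
  exists del, 0 < del /\ forall y, Rabs (y - x) < del -> Rabs (f y - f x) < eps.
Proof.
  intros hc eps he.
  assert (hp : continuity_pt f x) by (apply continuity_pt_filterlim; exact hc).
  rewrite continuity_pt_locally in hp.
  destruct (hp (mkposreal eps he)) as [del hd].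
  exists del. split; [apply cond_pos | exact hd].
Qed.

Lemma continuous_pos_near f x : continuous f x -> 0 < f x ->
  exists del, 0 < del /\ forall y, Rabs (y - x) < del -> 0 < f y.
Proof.
  intros hc hp. destruct (continuous_eps_delta f x hc (f x) hp) as [del [hd H]].
  exists del. split; [exact hd |]. intros y hy.
  specialize (H y hy). apply Rabs_lt_between in H. lra.
Qed.

Lemma continuous_ge_left f x r m : continuous f x -> 0 < r ->
  (forall y, x - r < y < x -> m <= f y) -> m <= f x.
Proof.
  intros hc hr H. apply Rnot_lt_le. intros hlt.
  destruct (continuous_eps_delta f x hc (m - f x)) as [del [hd Hd]]; [lra |].
  set (y := x - Rmin del r / 2).
  assert (0 < Rmin del r <= del) by (split; [apply Rmin_glb_lt; lra | apply Rmin_l]).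
  assert (Rmin del r <= r) by apply Rmin_r.
  specialize (H y ltac:(unfold y; lra)).
  specialize (Hd y ltac:(unfold y; rewrite Rabs_left; lra)).
  apply Rabs_lt_between in Hd. lra.
Qed.

Lemma continuous_Rmax_r m x : continuous (fun y => Rmax y m) x.
Proof.
  apply (continuous_ext (fun y => (y + m + Rabs (y - m)) / 2)).
  - intros y. change ((y + m + Rabs (y - m)) / 2 = Rmax y m).
    unfold Rmax. destruct (Rle_dec y m).
    + rewrite Rabs_left1 by lra. field.
    + rewrite Rabs_right by lra. field.
  - unfold Rdiv. apply (continuous_mult (fun y => y + m + Rabs (y - m)) (fun _ => / 2));
      [| apply continuous_const].
    apply (continuous_plus (fun y => y + m) (fun y => Rabs (y - m))).
    + apply (continuous_plus (fun y => y) (fun _ => m));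
        [apply continuous_id | apply continuous_const].
    + apply continuous_Rabs_comp, (continuous_minus (fun y => y) (fun _ => m));
        [apply continuous_id | apply continuous_const].
Qed.

Lemma real_induction (P : R -> Prop) :
  P 0 ->
  (forall t, 0 < t -> (forall u, 0 <= u < t -> P u) -> P t) ->
  (forall t, 0 <= t -> (forall u, 0 <= u <= t -> P u) ->
     exists e, 0 < e /\ forall u, t <= u <= t + e -> P u) ->
  forall t, 0 <= t -> P t.
Proof.
  intros h0 hclosed hopen.
  set (A := fun t => 0 <= t /\ forall u, 0 <= u <= t -> P u).
  assert (hA0 : A 0) by (split; [lra | intros u hu; replace u with 0 by lra; exact h0]).
  destruct (classic (bound A)) as [hbd | hunbd].
  2: { intros t ht. apply NNPP. intros hnP. apply hunbd. exists t.
       intros u [hu hPu]. apply Rnot_lt_le. intros htu. apply hnP, hPu. lra. }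
  destruct (completeness A hbd (ex_intro _ 0 hA0)) as [ts [hub hleast]].
  exfalso.
  assert (hts : 0 <= ts) by (apply hub, hA0).
  assert (hbelow : forall u, 0 <= u < ts -> P u).
  { intros u hu. apply NNPP. intros hnP.
    assert (hu_ub : is_upper_bound A u).
    { intros v [hv hPv]. apply Rnot_lt_le. intros huv. apply hnP, hPv. lra. }
    specialize (hleast u hu_ub). lra. }
  assert (hupto : forall u, 0 <= u <= ts -> P u).
  { intros u hu. destruct (Rlt_le_dec u ts); [apply hbelow; lra |].
    replace u with ts by lra. destruct (Req_dec ts 0) as [e | e].
    - rewrite e. exact h0.
    - apply hclosed; [lra | exact hbelow]. }
  destruct (hopen ts hts hupto) as [e [he hPe]].
  assert (hAe : A (ts + e)).
  { split; [lra |]. intros u hu.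
    destruct (Rle_lt_dec u ts); [apply hupto | apply hPe]; lra. }
  specialize (hub _ hAe). lra.
Qed.

Lemma lipschitz_of_derive_bound (X dX : R -> R) t0 B :
  (forall x, t0 < x -> is_derive X x (dX x)) -> (forall x, continuous X x) ->
  (forall x, t0 <= x -> Rabs (dX x) <= B) ->
  forall u v, t0 <= u -> t0 <= v -> Rabs (X v - X u) <= B * Rabs (v - u).
Proof.
  intros hder hcont hB u v hu hv.
  assert (hmin : t0 <= Rmin u v) by (apply Rmin_glb; lra).
  destruct (MVT_gen X u v dX) as [c [hc heq]].
  - intros x hx. apply hder. lra.
  - intros x _. apply continuity_pt_filterlim, hcont.
  - rewrite heq, Rabs_mult. apply Rmult_le_compat_r; [apply Rabs_pos | apply hB; lra].
Qed.

Section Barbalat.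

Variables (L X : R -> R) (t0 X2 B kap : R).
Hypotheses (hB : 0 < B) (hkap : 0 < kap).
Hypothesis hL : forall t, t0 <= t -> 0 <= L t.
Hypothesis hdec : forall u v, t0 <= u <= v ->
  exists c, u <= c <= v /\ L v <= L u - (v - u) * kap * (X c - X2) ^ 2.
Hypothesis hlip : forall u v, t0 <= u -> t0 <= v -> Rabs (X v - X u) <= B * Rabs (v - u).

Lemma barbalat_nonincreasing u v : t0 <= u <= v -> L v <= L u.
Proof.
  intros huv. destruct (hdec u v huv) as [c [_ hLc]].
  assert (0 <= (v - u) * kap * (X c - X2) ^ 2)
    by (apply Rmult_le_pos; [apply Rmult_le_pos | apply pow2_ge_0]; lra).
  lra.
Qed.

(* Within time [eps / (2 B)] of a point where [|X - X2| >= eps], [X] stays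
   [eps / 2] away from [X2]. *)
Lemma barbalat_drop t1 eps : t0 <= t1 -> 0 < eps -> eps <= Rabs (X t1 - X2) ->
  L (t1 + eps / (2 * B)) <= L t1 - eps / (2 * B) * kap * (eps / 2) ^ 2.
Proof.
  intros ht1 he hfar. set (del := eps / (2 * B)).
  assert (hdel : 0 < del) by (unfold del; pos).
  destruct (hdec t1 (t1 + del) ltac:(lra)) as [c [hc hLc]].
  assert (hmove : Rabs (X c - X t1) <= eps / 2).
  { replace (eps / 2) with (B * del) by (unfold del; field; lra).
    eapply Rle_trans; [apply hlip; lra |].
    apply Rmult_le_compat_l; [lra | rewrite Rabs_right; lra]. }
  assert (hfar_c : eps / 2 <= Rabs (X c - X2)).
  { pose proof (Rabs_triang (X t1 - X c) (X c - X2)) as htr.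
    replace (X t1 - X c + (X c - X2)) with (X t1 - X2) in htr by ring.
    rewrite (Rabs_minus_sym (X t1) (X c)) in htr. lra. }
  assert ((eps / 2) ^ 2 <= (X c - X2) ^ 2)
    by (rewrite <- (pow2_abs (X c - X2)); apply pow_incr; lra).
  replace (t1 + del - t1) with del in hLc by ring.
  assert (del * kap * (eps / 2) ^ 2 <= del * kap * (X c - X2) ^ 2)
    by (apply Rmult_le_compat_l; [apply Rmult_le_pos |]; lra).
  lra.
Qed.

(* Each excursion of [X] away from [X2] costs [L] a fixed amount, and [L >= 0]. *)
Lemma lyapunov_barbalat eps : 0 < eps ->
  exists M, forall t, M <= t -> Rabs (X t - X2) < eps.
Proof.
  intros he. apply NNPP. intros hne.
  assert (hbad : forall M, exists t, M <= t /\ eps <= Rabs (X t - X2)).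
  { intros M. apply NNPP. intros h. apply hne. exists M. intros t ht.
    apply Rnot_le_lt. intros h'. apply h. exists t. auto. }
  set (D := eps / (2 * B) * kap * (eps / 2) ^ 2).
  assert (hD : 0 < D) by (unfold D; apply Rmult_lt_0_compat; [pos | apply pow_lt; lra]).
  assert (hstep : forall t, t0 <= t -> exists t', t <= t' /\ L t' <= L t - D).
  { intros t ht. destruct (hbad t) as [t1 [ht1 hfar]].
    exists (t1 + eps / (2 * B)). split; [assert (0 < eps / (2 * B)) by pos; lra |].
    pose proof (barbalat_nonincreasing t t1 ltac:(lra)).
    pose proof (barbalat_drop t1 eps ltac:(lra) he hfar). unfold D. lra. }
  assert (hiter : forall n : nat, exists t, t0 <= t /\ L t <= L t0 - INR n * D).
  { induction n as [| n [t [ht hLt]]].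
    - exists t0. simpl. split; lra.
    - destruct (hstep t ht) as [t' [ht' hL']].
      exists t'. rewrite S_INR. split; lra. }
  destruct (INR_archimed D (L t0) hD) as [n hn].
  destruct (hiter n) as [t [ht hLt]]. specialize (hL t ht). lra.
Qed.

End Barbalat.

Lemma is_lim_p_infty_of_eps (f : R -> R) (l : R) :
  (forall eps, 0 < eps -> exists M, forall t, M <= t -> Rabs (f t - l) < eps) ->
  is_lim f p_infty l.
Proof.
  intros H. apply is_lim_spec. intros eps. destruct (H eps (cond_pos eps)) as [M hM].
  exists M. intros x hx. apply hM. lra.
Qed.

Lemma is_derive_RInt_lt (g : R -> R) a t1 y :
  (forall z, z <= t1 -> continuous g z) -> a <= t1 -> y < t1 ->
  is_derive (RInt g a) y (g y).
Proof.
  intros hg ha hy.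
  apply (is_derive_RInt (V := R_CompleteNormedModule) g (RInt g a) a y); [| apply hg; lra].
  assert (he : 0 < t1 - y) by lra.
  exists (mkposreal _ he). intros z hz.
  change (Rabs (z - y) < t1 - y) in hz. apply Rabs_lt_between in hz.
  apply (RInt_correct (V := R_CompleteNormedModule)), ex_RInt_continuous.
  intros x hx. apply hg.
  assert (Rmax a z <= t1) by (apply Rmax_lub; lra). lra.
Qed.

Lemma is_derive_RInt_shift_diff (g : R -> R) a tau t1 w :
  (forall z, z <= t1 -> continuous g z) -> a <= t1 -> w < t1 -> 0 <= tau ->
  is_derive (fun t => RInt g a t - RInt g a (t - tau)) w (g w - g (w - tau)).
Proof.
  intros hg ha hw htau.
  apply (is_derive_minus (RInt g a) (fun t => RInt g a (t - tau)));
    [apply (is_derive_RInt_lt g a t1); auto |].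
  assert (hsh : is_derive (fun t : R => t - tau) w 1) by (auto_derive; auto; ring).
  pose proof (is_derive_comp (RInt g a) (fun t => t - tau) w _ _
    (is_derive_RInt_lt g a t1 (w - tau) hg ha ltac:(lra)) hsh) as hc.
  replace (g (w - tau)) with (scal 1 (g (w - tau))) by
    (unfold scal; simpl; unfold mult; simpl; ring).
  exact hc.
Qed.

Lemma RInt_shift_diff_ge0 (g : R -> R) a tau t :
  (forall z, z <= t -> continuous g z) -> a <= t - tau -> 0 <= tau ->
  (forall z, t - tau <= z <= t -> 0 <= g z) ->
  0 <= RInt g a t - RInt g a (t - tau).
Proof.
  intros hg ha htau hpos.
  assert (hex : forall u v, u <= t -> v <= t -> ex_RInt g u v).
  { intros u v hu hv. apply (ex_RInt_continuous (V := R_CompleteNormedModule)).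
    intros z hz. apply hg.
    assert (Rmax u v <= t) by (apply Rmax_lub; lra). lra. }
  rewrite <- (RInt_Chasles (V := R_CompleteNormedModule) g a (t - tau) t)
    by (apply hex; lra).
  change (plus ?x ?y) with (x + y).
  assert (0 <= RInt g (t - tau) t).
  { apply RInt_ge_0; [lra | apply hex; lra |]. intros z hz. apply hpos; lra. }
  lra.
Qed.

Lemma dist3_lt x1 y1 z1 x2 y2 z2 e :
  dist3 x1 y1 z1 x2 y2 z2 < e <->
  Rabs (x1 - x2) < e /\ Rabs (y1 - y2) < e /\ Rabs (z1 - z2) < e.
Proof.
  unfold dist3. split.
  - intros h.
    pose proof (Rmax_l (Rabs (x1 - x2)) (Rmax (Rabs (y1 - y2)) (Rabs (z1 - z2)))).
    pose proof (Rmax_r (Rabs (x1 - x2)) (Rmax (Rabs (y1 - y2)) (Rabs (z1 - z2)))).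
    pose proof (Rmax_l (Rabs (y1 - y2)) (Rabs (z1 - z2))).
    pose proof (Rmax_r (Rabs (y1 - y2)) (Rabs (z1 - z2))).
    repeat split; lra.
  - intros [h1 [h2 h3]]. repeat apply Rmax_lub_lt; assumption.
Qed.

Definition total_rhs (s d a K N : R) : R := s - d * N + a * N * (1 - N / K).

Lemma fT_add_fI s d a K b al T I V :
  fT s d a K b al T I V + fI a K b al d T V T I = total_rhs s d a K (T + I).
Proof. unfold fT, fI, total_rhs. ring. Qed.

Lemma total_rhs_factor s d a K : 0 < s -> 0 < a -> 0 < K ->
  0 < T0 s d a K /\ exists r, r < 0 /\
  forall N, total_rhs s d a K N = - (a / K) * (N - T0 s d a K) * (N - r).
Proof.
  intros hs ha hK. unfold T0, total_rhs.
  set (D := (a - d) ^ 2 + 4 * a * s / K).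
  assert (hD : (a - d) ^ 2 < D) by (unfold D; assert (0 < 4 * a * s / K) by pos; lra).
  set (S := sqrt D).
  assert (hS : S * S = D) by (apply sqrt_sqrt; pose proof (pow2_ge_0 (a - d)); lra).
  assert (hS0 : 0 <= S) by apply sqrt_pos.
  assert (hSad : - (a - d) < S) by (apply Rnot_le_lt; intros; nra).
  split; [pos |].
  exists (K / (2 * a) * (a - d - S)). split; [assert (0 < K / (2 * a)) by pos; nra |].
  intros N. unfold D in hS. field_simplify; [| lra | lra].
  replace (S ^ 2) with (S * S) by ring. rewrite hS. field. lra.
Qed.

Lemma T0_root s d a K : 0 < s -> 0 < a -> 0 < K ->
  0 < T0 s d a K /\ total_rhs s d a K (T0 s d a K) = 0.
Proof.
  intros hs ha hK. destruct (total_rhs_factor s d a K hs ha hK) as [ht0 [r [_ hf]]].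
  split; [exact ht0 |]. rewrite hf. ring.
Qed.

Lemma T0_unique s d a K N : 0 < s -> 0 < a -> 0 < K -> 0 < N ->
  total_rhs s d a K N = 0 -> N = T0 s d a K.
Proof.
  intros hs ha hK hN hq. destruct (total_rhs_factor s d a K hs ha hK) as [_ [r [hr hf]]].
  rewrite hf in hq. assert (a / K <> 0) by (apply Rgt_not_eq; pos).
  apply Rmult_integral in hq as [hq | hq]; [apply Rmult_integral in hq as [hq | hq] |]; lra.
Qed.

Lemma basic_R0_gt1 s d a K b p c : 0 < s -> 0 < d -> 0 < a -> 0 < K -> 0 < c ->
  1 < basic_R0 s d a K b d p c -> s * c < b * p * T0 s d a K ^ 2.
Proof.
  intros hs hd ha hK hc hR0.
  destruct (T0_root s d a K hs ha hK) as [ht0 hroot].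
  unfold basic_R0, total_rhs in *. set (t0 := T0 s d a K) in *.
  assert (hlog : a * (1 - t0 / K) = d - s / t0).
  { apply Rmult_eq_reg_r with t0; [| lra].
    replace ((d - s / t0) * t0) with (d * t0 - s) by (field; lra). lra. }
  rewrite hlog in hR0.
  apply (Rmult_lt_compat_l d) in hR0; [| exact hd].
  replace (d * (/ d * (b * p * t0 / c + (d - s / t0)))) with
    (b * p * t0 / c + (d - s / t0)) in hR0 by (field; lra).
  assert (hq : s / t0 < b * p * t0 / c) by lra.
  apply (Rmult_lt_compat_r (t0 * c)) in hq; [| pos].
  replace (s / t0 * (t0 * c)) with (s * c) in hq by (field; lra).
  replace (b * p * t0 / c * (t0 * c)) with (b * p * t0 ^ 2) in hq by (field; lra).
  exact hq.
Qed.

Lemma fI_on_total_line s d a K b al p c t0 I :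
  0 < K -> 0 < t0 -> 0 < c -> 0 < al -> 0 < p -> 0 < I -> total_rhs s d a K t0 = 0 ->
  fI a K b al d (t0 - I) (p * I / c) (t0 - I) I * (t0 * (c + al * p * I))
  = I * (b * p * t0 * (t0 - I) - s * (c + al * p * I)).
Proof.
  intros hK ht0 hc hal hp hI hroot. unfold total_rhs in hroot.
  assert (hs : s = d * t0 - a * t0 * (1 - t0 / K)) by lra.
  assert (0 < al * (p * I)) by pos.
  unfold fI. rewrite hs. field. repeat split; lra.
Qed.

Lemma positive_equilibrium_iff s d a K b al p c T I V :
  0 < s -> 0 < a -> 0 < K -> 0 < al -> 0 < p -> 0 < c ->
  0 < T -> 0 < I -> 0 < V ->
  is_equilibrium s d a K b al d p c T I V <->
  T = T0 s d a K - I /\ V = p * I / c /\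
  b * p * T0 s d a K * (T0 s d a K - I) = s * (c + al * p * I).
Proof.
  intros hs ha hK hal hp hc hT hI hV.
  destruct (T0_root s d a K hs ha hK) as [ht0 hroot].
  set (t0 := T0 s d a K) in *.
  pose proof (fT_add_fI s d a K b al T I V) as hsum.
  unfold is_equilibrium. split.
  - intros [e1 [e2 e3]].
    assert (hN : T + I = t0) by (apply T0_unique; auto; lra).
    assert (hVI : V = p * I / c) by (unfold fV in e3; field_simplify_eq; lra).
    assert (hTI : T = t0 - I) by lra.
    pose proof (fI_on_total_line s d a K b al p c t0 I hK ht0 hc hal hp hI hroot) as hline.
    rewrite <- hTI, <- hVI, e2, Rmult_0_l in hline.
    split; [exact hTI | split; [exact hVI |]].
    rewrite <- hTI. symmetry in hline. apply Rmult_integral in hline. destruct hline; lra.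
  - intros [hTI [hVI hlin]].
    pose proof (fI_on_total_line s d a K b al p c t0 I hK ht0 hc hal hp hI hroot) as hline.
    rewrite hlin, Rminus_diag, Rmult_0_r, <- hTI, <- hVI in hline.
    assert (e2 : fI a K b al d T V T I = 0).
    { apply Rmult_integral in hline. destruct hline as [h | h]; [exact h |].
      exfalso. assert (0 < t0 * (c + al * p * I)) by pos. lra. }
    replace (T + I) with t0 in hsum by lra.
    split; [lra | split; [exact e2 |]].
    unfold fV. rewrite hVI. field. lra.
Qed.

Lemma infected_equilibrium s d a K b al p c :
  0 < s -> 0 < d -> 0 < a -> 0 < K -> 0 < b -> 0 < al -> 0 < p -> 0 < c ->
  1 < basic_R0 s d a K b d p c ->
  exists T2 I2 V2 : R,
    0 < T2 /\ 0 < I2 /\ 0 < V2 /\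
    is_equilibrium s d a K b al d p c T2 I2 V2 /\
    (forall T I V : R, 0 < T -> 0 < I -> 0 < V ->
       is_equilibrium s d a K b al d p c T I V -> T = T2 /\ I = I2 /\ V = V2).
Proof.
  intros hs hd ha hK hb hal hp hc hR0.
  pose proof (basic_R0_gt1 s d a K b p c hs hd ha hK hc hR0) as hsc.
  destruct (T0_root s d a K hs ha hK) as [ht0 _].
  set (t0 := T0 s d a K) in *.
  assert (hden : 0 < b * p * t0 + s * al * p) by pos.
  set (I2 := (b * p * t0 ^ 2 - s * c) / (b * p * t0 + s * al * p)).
  assert (hI2 : 0 < I2) by (unfold I2; pos).
  assert (hlin : forall I, b * p * t0 * (t0 - I) = s * (c + al * p * I) <-> I = I2).
  { intros I. unfold I2. split; intros h.
    - apply Rmult_eq_reg_r with (b * p * t0 + s * al * p); [| lra].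
      field_simplify; lra.
    - rewrite h. field. lra. }
  assert (hT2 : 0 < t0 - I2).
  { assert (hI2t : I2 * (b * p * t0 + s * al * p) < t0 * (b * p * t0 + s * al * p)).
    { unfold I2. field_simplify; [| lra]. assert (0 < s * al * p * t0) by pos. nra. }
    apply Rmult_lt_reg_r in hI2t; lra. }
  exists (t0 - I2), I2, (p * I2 / c).
  split; [exact hT2 | split; [exact hI2 | split; [pos | split]]].
  - apply positive_equilibrium_iff; auto; [pos |].
    split; [reflexivity | split; [reflexivity |]]. apply hlin. reflexivity.
  - intros T I V hT hI hV hE.
    apply positive_equilibrium_iff in hE as [hTI [hVI hlinI]]; auto.
    apply hlin in hlinI. subst I. auto.
Qed.

Definition incidence (b al T V : R) : R := b * T * V / (1 + al * V).

Lemma incidence_bounds b al x y : 0 < b -> 0 < al -> 0 < x -> 0 < y ->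
  0 < incidence b al x y <= b * x * y.
Proof.
  intros hb hal hx hy. unfold incidence. split; [pos |].
  apply Rmult_le_reg_r with (1 + al * y); [pos |].
  field_simplify; [| nra]. assert (0 < b * x * y * (al * y)) by pos. nra.
Qed.

Lemma continuous_incidence_comp b al (T V : R -> R) t :
  continuous T t -> continuous V t -> 1 + al * V t <> 0 ->
  continuous (fun y => incidence b al (T y) (V y)) t.
Proof.
  intros hT hV hn. unfold incidence, Rdiv.
  apply (continuous_mult (fun y => b * T y * V y) (fun y => / (1 + al * V y))).
  - apply (continuous_mult (fun y => b * T y) V); [| exact hV].
    apply (continuous_mult (fun _ => b) T); [apply continuous_const | exact hT].
  - apply continuous_Rinv_comp; [| exact hn].
    apply (continuous_plus (fun _ => 1) (fun y => al * V y)); [apply continuous_const |].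
    apply (continuous_mult (fun _ => al) V); [apply continuous_const | exact hV].
Qed.

Lemma Rabs_logistic_le a K x z M : 0 < a -> 0 < K -> 0 < x <= M -> 0 < z <= 2 * M ->
  Rabs (a * x * (1 - z / K)) <= a * M * (1 + 2 * M / K).
Proof.
  intros ha hK hx hz.
  assert (h1 : 0 <= a * x * (z / K) <= a * M * (2 * M / K)).
  { split; [left; pos |]. apply Rmult_le_compat; [left; pos | left; pos | nra |].
    apply Rmult_le_compat_r; [left; pos | lra]. }
  assert (h2 : a * x <= a * M) by (apply Rmult_le_compat_l; lra).
  apply Rabs_le. nra.
Qed.

Lemma Rabs_fT_le s d a K b al T I V M :
  0 < s -> 0 < d -> 0 < a -> 0 < K -> 0 < b -> 0 < al ->
  0 < T <= M -> 0 < I <= M -> 0 < V <= M ->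
  Rabs (fT s d a K b al T I V) <= s + d * M + a * M * (1 + 2 * M / K) + b * M * M.
Proof.
  intros hs hd ha hK hb hal hT hI hV.
  pose proof (Rabs_logistic_le a K T (T + I) M ha hK hT ltac:(lra)) as hlog.
  pose proof (incidence_bounds b al T V hb hal (proj1 hT) (proj1 hV)) as hinc.
  assert (b * T * V <= b * M * M) by (apply Rmult_le_compat; [left; pos | lra | nra | lra]).
  assert (d * T <= d * M) by (apply Rmult_le_compat_l; lra).
  unfold fT. apply Rabs_le. apply Rabs_le_between in hlog. unfold incidence in hinc. nra.
Qed.

Lemma Rabs_fI_le a K b al mu Td Vd T I M :
  0 < a -> 0 < K -> 0 < b -> 0 < al -> 0 < mu ->
  0 < Td <= M -> 0 < Vd <= M -> 0 < T <= M -> 0 < I <= M ->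
  Rabs (fI a K b al mu Td Vd T I) <= b * M * M + a * M * (1 + 2 * M / K) + mu * M.
Proof.
  intros ha hK hb hal hmu hTd hVd hT hI.
  pose proof (Rabs_logistic_le a K I (T + I) M ha hK hI ltac:(lra)) as hlog.
  pose proof (incidence_bounds b al Td Vd hb hal (proj1 hTd) (proj1 hVd)) as hinc.
  assert (b * Td * Vd <= b * M * M) by (apply Rmult_le_compat; [left; pos | lra | nra | lra]).
  assert (mu * I <= mu * M) by (apply Rmult_le_compat_l; lra).
  unfold fI. apply Rabs_le. apply Rabs_le_between in hlog. unfold incidence in hinc. nra.
Qed.

Lemma Rabs_fV_le p c I V M : 0 < p -> 0 < c -> 0 < I <= M -> 0 < V <= M ->
  Rabs (fV p c I V) <= p * M + c * M.
Proof.
  intros hp hc hI hV.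
  assert (p * I <= p * M) by (apply Rmult_le_compat_l; lra).
  assert (c * V <= c * M) by (apply Rmult_le_compat_l; lra).
  unfold fV. apply Rabs_le. nra.
Qed.

Lemma Rabs_bilinear_le A B C x y del : 0 <= A -> 0 <= B -> 0 <= C -> del <= 1 ->
  Rabs x <= del -> Rabs y <= del -> Rabs (A * x + B * y + C * (x * y)) <= (A + B + C) * del.
Proof.
  intros hA hB hC h1 hx hy.
  assert (hxy : Rabs (x * y) <= del).
  { rewrite Rabs_mult. pose proof (Rabs_pos x). pose proof (Rabs_pos y). nra. }
  eapply Rle_trans; [apply Rabs_triang |].
  eapply Rle_trans; [apply Rplus_le_compat_r, Rabs_triang |].
  rewrite !Rabs_mult, (Rabs_right A), (Rabs_right B), (Rabs_right C) by lra.
  rewrite Rabs_mult in hxy. nra.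
Qed.

Lemma incidence_ratio_near b al T2 V2 T V del :
  0 < b -> 0 < al -> 0 < T2 -> 0 < V2 -> 0 < V -> del <= 1 ->
  Rabs (T - T2) <= del -> Rabs (V - V2) <= del ->
  Rabs (incidence b al T V / incidence b al T2 V2 - 1)
    <= ((1 + al * V2) * V2 + T2 + (1 + al * V2)) / (T2 * V2) * del.
Proof.
  intros hb hal hT2 hV2 hV h1 hx hy. unfold incidence.
  set (e1 := T - T2). set (e2 := V - V2).
  assert (hden : 0 < T2 * V2 * (1 + al * V)) by pos.
  replace (b * T * V / (1 + al * V) / (b * T2 * V2 / (1 + al * V2)) - 1) with
     (((1 + al * V2) * V2 * e1 + T2 * e2 + (1 + al * V2) * (e1 * e2)) / (T2 * V2 * (1 + al * V)))
    by (unfold e1, e2; field; repeat split; try lra; pos).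
  unfold Rdiv. rewrite Rabs_mult, Rabs_inv, (Rabs_right (T2 * V2 * (1 + al * V))) by lra.
  pose proof (Rabs_bilinear_le ((1 + al * V2) * V2) T2 (1 + al * V2) e1 e2 del
    ltac:(left; pos) ltac:(lra) ltac:(left; pos) h1 hx hy) as hnum.
  assert (hinv : / (T2 * V2 * (1 + al * V)) <= / (T2 * V2)).
  { apply Rinv_le_contravar; [pos |]. assert (0 < T2 * V2 * (al * V)) by pos. nra. }
  assert (0 <= / (T2 * V2 * (1 + al * V))) by (left; pos).
  assert (0 <= ((1 + al * V2) * V2 + T2 + (1 + al * V2)) * del)
    by (eapply Rle_trans; [apply Rabs_pos | exact hnum]).
  apply Rle_trans with (((1 + al * V2) * V2 + T2 + (1 + al * V2)) * del * / (T2 * V2)).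
  - apply Rmult_le_compat; [apply Rabs_pos | lra | exact hnum | exact hinv].
  - right. field. lra.
Qed.

Lemma equilibrium_parameters s d a K b al p c T2 I2 V2 :
  0 < s -> 0 < T2 -> 0 < I2 -> 0 < V2 -> 0 < c ->
  is_equilibrium s d a K b al d p c T2 I2 V2 ->
  0 < d - a * (1 - (T2 + I2) / K) /\
  s = (d - a * (1 - (T2 + I2) / K)) * (T2 + I2) /\
  incidence b al T2 V2 = (d - a * (1 - (T2 + I2) / K)) * I2 /\
  c = p * I2 / V2.
Proof.
  intros hs hT2 hI2 hV2 hc [e1 [e2 e3]].
  pose proof (fT_add_fI s d a K b al T2 I2 V2) as hsum.
  rewrite e1, e2 in hsum. unfold total_rhs in hsum. unfold fI in e2. unfold fV in e3.
  assert (hsq : s = (d - a * (1 - (T2 + I2) / K)) * (T2 + I2)) by lra.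
  split; [| split; [exact hsq | split]].
  - apply Rmult_lt_reg_r with (T2 + I2); [lra |]. lra.
  - unfold incidence. lra.
  - field_simplify_eq; lra.
Qed.

Section Stability.

Variables s d a K b al p c tau T2 I2 V2 : R.
Hypotheses (hs : 0 < s) (hd : 0 < d) (ha : 0 < a) (hK : 0 < K) (hb : 0 < b)
  (hal : 0 < al) (hp : 0 < p) (hc : 0 < c) (htau : 0 <= tau)
  (hT2 : 0 < T2) (hI2 : 0 < I2) (hV2 : 0 < V2).
Hypothesis hE : is_equilibrium s d a K b al d p c T2 I2 V2.

Definition B2 := incidence b al T2 V2.
Definition kV := B2 / (p * I2).

Lemma B2_pos : 0 < B2.
Proof. apply incidence_bounds; auto. Qed.

Lemma kV_pos : 0 < kV.
Proof. pose proof B2_pos. unfold kV. pos. Qed.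

Definition dissipation (T I V : R) : R :=
  s / (T * (T2 + I2)) * (T - T2) ^ 2 + a / K * (T + I - T2 - I2) ^ 2
  + B2 * al * (V - V2) ^ 2 / (V2 * (1 + al * V) * (1 + al * V2)).

(* The four ratios multiply to [incidence Td Vd / incidence T V]; this is what
   makes the [ln] terms of the Volterra functions telescope. *)
Lemma lyapunov_rate_identity T I V Td Vd :
  0 < T -> 0 < I -> 0 < V -> 0 < Td -> 0 < Vd ->
  (1 - T2 / T) * fT s d a K b al T I V
  + (1 - I2 / I) * fI a K b al d Td Vd T I
  + kV * ((1 - V2 / V) * fV p c I V)
  + B2 * (incidence b al T V / B2 - incidence b al Td Vd / B2
          + (T2 / T - 1) + (incidence b al Td Vd / B2 * I2 / I - 1)
          + (I * V2 / (I2 * V) - 1) + ((1 + al * V) / (1 + al * V2) - 1))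
  = - dissipation T I V.
Proof.
  intros hT hI hV hTd hVd.
  destruct (equilibrium_parameters s d a K b al p c T2 I2 V2 hs hT2 hI2 hV2 hc hE)
    as [hq [hsE [hbE hcE]]].
  set (q := d - a * (1 - (T2 + I2) / K)) in *.
  assert (hbq : b = q * I2 * (1 + al * V2) / (T2 * V2)).
  { rewrite <- hbE. unfold incidence. field. nonzero. }
  assert (hdq : d = q + a * (1 - (T2 + I2) / K)) by (unfold q; ring).
  clearbody q.
  unfold kV, dissipation, B2, incidence, fT, fI, fV.
  rewrite hsE, hbq, hcE, hdq.
  field. nonzero.
Qed.

Lemma lyapunov_rate_le T I V Td Vd :
  0 < T -> 0 < I -> 0 < V -> 0 < Td -> 0 < Vd ->
  (1 - T2 / T) * fT s d a K b al T I V
  + (1 - I2 / I) * fI a K b al d Td Vd T I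
  + kV * ((1 - V2 / V) * fV p c I V)
  + B2 * (volterra (incidence b al T V / B2) - volterra (incidence b al Td Vd / B2))
  <= - dissipation T I V.
Proof.
  intros hT hI hV hTd hVd.
  rewrite <- (lyapunov_rate_identity T I V Td Vd hT hI hV hTd hVd).
  pose proof B2_pos as hB2.
  set (xw := incidence b al T V / B2).
  set (xd := incidence b al Td Vd / B2).
  assert (hxw : 0 < xw) by (apply Rdiv_lt_0_compat; [apply incidence_bounds |]; auto).
  assert (hxd : 0 < xd) by (apply Rdiv_lt_0_compat; [apply incidence_bounds |]; auto).
  set (r1 := T2 / T). set (r2 := xd * I2 / I). set (r3 := I * V2 / (I2 * V)).
  set (r4 := (1 + al * V) / (1 + al * V2)).
  assert (0 < r1) by (unfold r1; pos). assert (0 < r2) by (unfold r2; pos).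
  assert (0 < r3) by (unfold r3; pos). assert (0 < r4) by (unfold r4; pos).
  assert (hprod : xd / xw = r1 * r2 * r3 * r4).
  { unfold r1, r2, r3, r4, xd, xw, B2, incidence. field. nonzero. }
  assert (hln : ln xd - ln xw = ln r1 + ln r2 + ln r3 + ln r4).
  { rewrite <- ln_div, hprod by lra. rewrite !ln_mult by pos. ring. }
  pose proof (ln_le_sub1 r1 ltac:(lra)). pose proof (ln_le_sub1 r2 ltac:(lra)).
  pose proof (ln_le_sub1 r3 ltac:(lra)). pose proof (ln_le_sub1 r4 ltac:(lra)).
  apply Rplus_le_compat_l, Rmult_le_compat_l; [lra |].
  unfold volterra. lra.
Qed.

Lemma dissipation_nonneg T I V : 0 < T -> 0 < V -> 0 <= dissipation T I V.
Proof.
  intros hT hV. pose proof B2_pos. unfold dissipation.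
  assert (0 <= s / (T * (T2 + I2)) * (T - T2) ^ 2)
    by (apply Rmult_le_pos; [left; pos | apply pow2_ge_0]).
  assert (0 <= a / K * (T + I - T2 - I2) ^ 2)
    by (apply Rmult_le_pos; [left; pos | apply pow2_ge_0]).
  assert (0 <= B2 * al * (V - V2) ^ 2 / (V2 * (1 + al * V) * (1 + al * V2))).
  { unfold Rdiv. apply Rmult_le_pos; [apply Rmult_le_pos; [left; pos | apply pow2_ge_0] |].
    left; pos. }
  lra.
Qed.

Lemma dissipation_lower_bounds T I V M :
  0 < T <= M -> 0 < I -> 0 < V <= M ->
  s / (M * (T2 + I2)) * (T - T2) ^ 2 <= dissipation T I V /\
  a / K * (T + I - (T2 + I2)) ^ 2 <= dissipation T I V /\
  B2 * al / (V2 * (1 + al * M) * (1 + al * V2)) * (V - V2) ^ 2 <= dissipation T I V.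
Proof.
  intros hT hI hV. pose proof B2_pos.
  assert (hsT : s / (M * (T2 + I2)) * (T - T2) ^ 2 <= s / (T * (T2 + I2)) * (T - T2) ^ 2).
  { apply Rmult_le_compat_r; [apply pow2_ge_0 |].
    apply Rmult_le_compat_l; [lra |]. apply Rinv_le_contravar; [pos |].
    apply Rmult_le_compat_r; lra. }
  assert (hV' : B2 * al / (V2 * (1 + al * M) * (1 + al * V2)) * (V - V2) ^ 2
      <= B2 * al * (V - V2) ^ 2 / (V2 * (1 + al * V) * (1 + al * V2))).
  { unfold Rdiv. rewrite Rmult_assoc, (Rmult_comm (/ _)), <- Rmult_assoc.
    apply Rmult_le_compat_l; [apply Rmult_le_pos; [left; pos | apply pow2_ge_0] |].
    apply Rinv_le_contravar; [pos |].
    apply Rmult_le_compat_r; [left; pos |]. apply Rmult_le_compat_l; nra. }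
  assert (0 <= s / (T * (T2 + I2)) * (T - T2) ^ 2)
    by (apply Rmult_le_pos; [left; pos | apply pow2_ge_0]).
  assert (0 <= a / K * (T + I - T2 - I2) ^ 2)
    by (apply Rmult_le_pos; [left; pos | apply pow2_ge_0]).
  assert (0 <= B2 * al / (V2 * (1 + al * M) * (1 + al * V2)) * (V - V2) ^ 2)
    by (apply Rmult_le_pos; [left; pos | apply pow2_ge_0]).
  replace (T + I - (T2 + I2)) with (T + I - T2 - I2) by ring.
  unfold dissipation. lra.
Qed.

Definition ratio_lip := ((1 + al * V2) * V2 + T2 + (1 + al * V2)) / (T2 * V2).
Definition history_radius := Rmin (Rmin 1 (T2 / 2)) (Rmin (Rmin (I2 / 2) (V2 / 2)) (1 / (2 * ratio_lip))).
Definition lyap_initial_slope := 2 / T2 + 2 / I2 + kV * (2 / V2) + B2 * (tau * (2 * ratio_lip ^ 2)).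

Lemma ratio_lip_pos : 0 < ratio_lip.
Proof. unfold ratio_lip. pos. Qed.

Lemma history_radius_spec : 0 < history_radius /\ history_radius <= 1 /\ history_radius <= T2 / 2 /\ history_radius <= I2 / 2 /\
  history_radius <= V2 / 2 /\ history_radius <= 1 / (2 * ratio_lip).
Proof.
  pose proof ratio_lip_pos. unfold history_radius.
  pose proof (Rmin_l (Rmin 1 (T2 / 2)) (Rmin (Rmin (I2 / 2) (V2 / 2)) (1 / (2 * ratio_lip)))).
  pose proof (Rmin_r (Rmin 1 (T2 / 2)) (Rmin (Rmin (I2 / 2) (V2 / 2)) (1 / (2 * ratio_lip)))).
  pose proof (Rmin_l 1 (T2 / 2)). pose proof (Rmin_r 1 (T2 / 2)).
  pose proof (Rmin_l (Rmin (I2 / 2) (V2 / 2)) (1 / (2 * ratio_lip))).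
  pose proof (Rmin_r (Rmin (I2 / 2) (V2 / 2)) (1 / (2 * ratio_lip))).
  pose proof (Rmin_l (I2 / 2) (V2 / 2)). pose proof (Rmin_r (I2 / 2) (V2 / 2)).
  repeat split; try lra.
  repeat apply Rmin_glb_lt; pos.
Qed.

Lemma volterra_incidence_near x y del : 0 < y -> 0 <= del <= history_radius ->
  Rabs (x - T2) <= del -> Rabs (y - V2) <= del ->
  volterra (incidence b al x y / B2) <= 2 * ratio_lip ^ 2 * del.
Proof.
  intros hy hdel hx hy2. pose proof ratio_lip_pos as hCr.
  destruct history_radius_spec as [_ [h1 [_ [_ [_ hCdel]]]]].
  pose proof (incidence_ratio_near b al T2 V2 x y del hb hal hT2 hV2 hy ltac:(lra) hx hy2)
    as hr.
  fold B2 ratio_lip in hr. set (rho := incidence b al x y / B2) in *.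
  assert (hhalf : ratio_lip * del <= 1 / 2).
  { apply Rle_trans with (ratio_lip * (1 / (2 * ratio_lip))); [apply Rmult_le_compat_l; lra |].
    right. field. lra. }
  apply Rabs_le_between in hr.
  pose proof (volterra_le_sqr_div rho ltac:(lra)).
  assert ((rho - 1) ^ 2 / rho <= 2 * (rho - 1) ^ 2).
  { apply Rmult_le_reg_r with rho; [lra |].
    replace ((rho - 1) ^ 2 / rho * rho) with ((rho - 1) ^ 2) by (field; lra).
    pose proof (pow2_ge_0 (rho - 1)). nra. }
  assert ((rho - 1) ^ 2 <= ratio_lip ^ 2 * del).
  { apply Rle_trans with ((ratio_lip * del) ^ 2).
    - rewrite <- pow2_abs. apply pow_incr. split; [apply Rabs_pos | apply Rabs_le; lra].
    - replace ((ratio_lip * del) ^ 2) with (ratio_lip ^ 2 * (del * del)) by ring.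
      apply Rmult_le_compat_l; [apply pow2_ge_0 | nra]. }
  lra.
Qed.

Section Solution.

Variables T I V : R -> R.
Hypothesis hsol : is_solution s d a K b al d p c tau T I V.
Hypothesis hini : positive_initial_data tau T I V.

Definition positive_at (t : R) : Prop := 0 < T t /\ 0 < I t /\ 0 < V t.
Definition positive_upto (t1 : R) : Prop := forall th, - tau <= th <= t1 -> positive_at th.

(* The integrand of the delay term of the Lyapunov functional, frozen at its
   value at [-tau] to the left of [-tau] so that it is continuous near [-tau]. *)
Definition memory_density (th : R) : R :=
  volterra (incidence b al (T (Rmax th (- tau))) (V (Rmax th (- tau))) / B2).

Definition lyap (t : R) : R :=
  volterra_at T2 (T t) + volterra_at I2 (I t) + kV * volterra_at V2 (V t)
  + B2 * (RInt memory_density (- tau) t - RInt memory_density (- tau) (t - tau)).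

Definition lyap_rate (w : R) : R :=
  (1 - T2 / T w) * fT s d a K b al (T w) (I w) (V w)
  + (1 - I2 / I w) * fI a K b al d (T (w - tau)) (V (w - tau)) (T w) (I w)
  + kV * ((1 - V2 / V w) * fV p c (I w) (V w))
  + B2 * (memory_density w - memory_density (w - tau)).

Lemma memory_densityE th : - tau <= th ->
  memory_density th = volterra (incidence b al (T th) (V th) / B2).
Proof. intros h. unfold memory_density. rewrite Rmax_left by lra. reflexivity. Qed.

Lemma memory_density_pos_arg t1 th : positive_upto t1 -> - tau <= t1 -> th <= t1 ->
  0 < incidence b al (T (Rmax th (- tau))) (V (Rmax th (- tau))) / B2.
Proof.
  intros hP ht1 hth. pose proof B2_pos.
  assert (hz : - tau <= Rmax th (- tau) <= t1)
    by (split; [apply Rmax_r | apply Rmax_lub; lra]).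
  destruct (hP _ hz) as [hTz [_ hVz]].
  apply Rdiv_lt_0_compat; [apply incidence_bounds |]; auto.
Qed.

Lemma memory_density_continuous t1 th : positive_upto t1 -> - tau <= t1 -> th <= t1 ->
  continuous memory_density th.
Proof.
  intros hP ht1 hth. pose proof B2_pos. unfold memory_density.
  apply (continuous_comp (fun z => Rmax z (- tau))
    (fun z => volterra (incidence b al (T z) (V z) / B2))); [apply continuous_Rmax_r |].
  apply continuous_volterra_comp; [| apply (memory_density_pos_arg t1); auto].
  unfold Rdiv. apply (continuous_mult (fun z => incidence b al (T z) (V z)) (fun _ => / B2));
    [| apply continuous_const].
  apply continuous_incidence_comp; try apply hsol.
  assert (hz : - tau <= Rmax th (- tau) <= t1)
    by (split; [apply Rmax_r | apply Rmax_lub; lra]).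
  destruct (hP _ hz) as [_ [_ hVz]]. nra.
Qed.

Lemma memory_density_nonneg t1 th : positive_upto t1 -> - tau <= t1 -> th <= t1 ->
  0 <= memory_density th.
Proof. intros. apply volterra_ge0, (memory_density_pos_arg t1); auto. Qed.

Lemma lyap_derive t1 w : positive_upto t1 -> 0 < w < t1 -> is_derive lyap w (lyap_rate w).
Proof.
  intros hP hw.
  destruct (proj2 hsol w (proj1 hw)) as [dT [dI dV]].
  destruct (hP w ltac:(lra)) as [pT [pI pV]].
  assert (hmem : is_derive
      (fun t => RInt memory_density (- tau) t - RInt memory_density (- tau) (t - tau)) w
      (memory_density w - memory_density (w - tau))).
  { apply (is_derive_RInt_shift_diff _ _ _ t1); [| lra | lra | lra].
    intros z hz. apply (memory_density_continuous t1); auto; lra. }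
  unfold lyap, lyap_rate.
  repeat apply (is_derive_plus (V := R_NormedModule));
    [apply volterra_at_derive; auto | apply volterra_at_derive; auto
    | apply (is_derive_scal (fun t => volterra_at V2 (V t))), volterra_at_derive; auto
    | apply (is_derive_scal (fun t => _ - _)), hmem].
Qed.

Lemma lyap_continuity_pt t1 w : positive_upto t1 -> 0 <= w < t1 -> continuity_pt lyap w.
Proof.
  intros hP hw. apply continuity_pt_filterlim.
  destruct (hP w ltac:(lra)) as [pT [pI pV]].
  destruct (proj1 hsol w) as [cT [cI cV]].
  assert (hmem : continuous
      (fun t => RInt memory_density (- tau) t - RInt memory_density (- tau) (t - tau)) w).
  { apply (ex_derive_continuous (V := R_NormedModule)). eexists.
    apply (is_derive_RInt_shift_diff _ _ _ t1); [| lra | lra | lra].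
    intros z hz. apply (memory_density_continuous t1); auto; lra. }
  unfold lyap.
  apply (continuous_plus
    (fun t => volterra_at T2 (T t) + volterra_at I2 (I t) + kV * volterra_at V2 (V t))
    (fun t => B2 * (RInt memory_density (- tau) t - RInt memory_density (- tau) (t - tau)))).
  - apply (continuous_plus (fun t => volterra_at T2 (T t) + volterra_at I2 (I t))
      (fun t => kV * volterra_at V2 (V t))).
    + apply (continuous_plus (fun t => volterra_at T2 (T t)) (fun t => volterra_at I2 (I t)));
        apply continuous_volterra_at; auto.
    + apply (continuous_mult (fun _ => kV) (fun t => volterra_at V2 (V t)));
        [apply continuous_const | apply continuous_volterra_at; auto].
  - apply (continuous_mult (fun _ => B2) _); [apply continuous_const | exact hmem].
Qed.

Lemma lyap_rate_le t1 w : positive_upto t1 -> 0 <= w <= t1 ->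
  lyap_rate w <= - dissipation (T w) (I w) (V w).
Proof.
  intros hP hw.
  destruct (hP w ltac:(lra)) as [pT [pI pV]].
  destruct (hP (w - tau) ltac:(lra)) as [pTd [_ pVd]].
  unfold lyap_rate. rewrite !memory_densityE by lra.
  apply lyapunov_rate_le; auto.
Qed.

Lemma lyap_decrease_upto t1 u v : positive_upto t1 -> 0 <= u <= v -> v < t1 ->
  exists c0, u <= c0 <= v /\ lyap v <= lyap u - (v - u) * dissipation (T c0) (I c0) (V c0).
Proof.
  intros hP huv hv.
  destruct (MVT_gen lyap u v lyap_rate) as [c0 [hc0 hmvt]].
  - intros x hx. rewrite Rmin_left, Rmax_right in hx by lra.
    apply (lyap_derive t1); auto; lra.
  - intros x hx. rewrite Rmin_left, Rmax_right in hx by lra.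
    apply (lyap_continuity_pt t1); auto; lra.
  - rewrite Rmin_left, Rmax_right in hc0 by lra.
    exists c0. split; [exact hc0 |].
    pose proof (lyap_rate_le t1 c0 hP ltac:(lra)).
    assert (lyap_rate c0 * (v - u) <= - dissipation (T c0) (I c0) (V c0) * (v - u))
      by (apply Rmult_le_compat_r; lra).
    lra.
Qed.

Lemma lyap_ge_parts t1 t : positive_upto t1 -> 0 <= t <= t1 ->
  volterra_at T2 (T t) <= lyap t /\ volterra_at I2 (I t) <= lyap t /\
  kV * volterra_at V2 (V t) <= lyap t /\ 0 <= lyap t.
Proof.
  intros hP ht. destruct (hP t ltac:(lra)) as [pT [pI pV]].
  pose proof B2_pos. pose proof kV_pos.
  pose proof (volterra_at_ge0 T2 (T t) hT2 pT).
  pose proof (volterra_at_ge0 I2 (I t) hI2 pI).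
  assert (0 <= kV * volterra_at V2 (V t))
    by (apply Rmult_le_pos; [lra | apply volterra_at_ge0; auto]).
  assert (0 <= RInt memory_density (- tau) t - RInt memory_density (- tau) (t - tau)).
  { apply RInt_shift_diff_ge0; [| lra | lra |].
    - intros z hz. apply (memory_density_continuous t1); auto; lra.
    - intros z hz. apply (memory_density_nonneg t1); auto; lra. }
  assert (0 <= B2 * (RInt memory_density (- tau) t - RInt memory_density (- tau) (t - tau)))
    by (apply Rmult_le_pos; lra).
  unfold lyap. lra.
Qed.

Lemma lyap_le_initial_upto t1 t : positive_upto t1 -> 0 <= t < t1 -> lyap t <= lyap 0.
Proof.
  intros hP ht.
  destruct (lyap_decrease_upto t1 0 t hP ltac:(lra) ltac:(lra)) as [c0 [hc0 hdec]].
  destruct (hP c0 ltac:(lra)) as [pT [_ pV]].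
  pose proof (dissipation_nonneg (T c0) (I c0) (V c0) pT pV).
  assert (0 <= (t - 0) * dissipation (T c0) (I c0) (V c0)) by (apply Rmult_le_pos; lra).
  lra.
Qed.

Lemma lyap_lower_bounds_upto t1 u : positive_upto t1 -> 0 <= u < t1 ->
  T2 * exp (- ((lyap 0 + T2) / T2)) <= T u /\ I2 * exp (- ((lyap 0 + I2) / I2)) <= I u /\
  V2 * exp (- ((lyap 0 / kV + V2) / V2)) <= V u.
Proof.
  intros hP hu. pose proof kV_pos.
  destruct (hP u ltac:(lra)) as [pT [pI pV]].
  destruct (lyap_ge_parts t1 u hP ltac:(lra)) as [h1 [h2 [h3 _]]].
  pose proof (lyap_le_initial_upto t1 u hP hu).
  split; [| split]; apply volterra_at_le_lower; auto; try lra.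
  apply Rmult_le_reg_l with kV; [lra |].
  replace (kV * (lyap 0 / kV)) with (lyap 0) by (field; lra). lra.
Qed.

Lemma positive_at_extends t : positive_at t ->
  exists e, 0 < e /\ forall u, t <= u <= t + e -> positive_at u.
Proof.
  intros [pT [pI pV]]. destruct (proj1 hsol t) as [cT [cI cV]].
  destruct (continuous_pos_near T t cT pT) as [e1 [he1 H1]].
  destruct (continuous_pos_near I t cI pI) as [e2 [he2 H2]].
  destruct (continuous_pos_near V t cV pV) as [e3 [he3 H3]].
  set (e := Rmin e1 (Rmin e2 e3)).
  assert (he : 0 < e) by (repeat apply Rmin_glb_lt; auto).
  assert (e <= e1 /\ e <= e2 /\ e <= e3).
  { pose proof (Rmin_l e1 (Rmin e2 e3)). pose proof (Rmin_r e1 (Rmin e2 e3)).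
    pose proof (Rmin_l e2 e3). pose proof (Rmin_r e2 e3). unfold e. lra. }
  exists (e / 2). split; [lra |]. intros u hu.
  assert (Rabs (u - t) < e) by (rewrite Rabs_right; lra).
  split; [apply H1 | split; [apply H2 | apply H3]]; lra.
Qed.

(* While the solution stays positive, [lyap <= lyap 0] keeps each component
   above a fixed positive level, so positivity can never be lost. *)
Lemma solution_positive t : - tau <= t -> positive_at t.
Proof.
  assert (hupto : forall t1, (forall u, 0 <= u <= t1 -> positive_at u) -> positive_upto t1).
  { intros t1 H th hth. destruct (Rle_lt_dec th 0); [apply hini; lra | apply H; lra]. }
  assert (hpos : forall u, 0 <= u -> positive_at u).
  { apply real_induction.
    - apply hini. lra.
    - intros t1 ht1 hbelow. destruct (proj1 hsol t1) as [cT [cI cV]].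
      pose proof kV_pos.
      assert (hleft : forall y, t1 - t1 < y < t1 ->
          T2 * exp (- ((lyap 0 + T2) / T2)) <= T y /\
          I2 * exp (- ((lyap 0 + I2) / I2)) <= I y /\
          V2 * exp (- ((lyap 0 / kV + V2) / V2)) <= V y).
      { intros y hy. apply (lyap_lower_bounds_upto ((y + t1) / 2)); [| lra].
        apply hupto. intros u hu. apply hbelow. lra. }
      split; [| split]; (eapply Rlt_le_trans;
        [| apply (continuous_ge_left _ t1 t1); auto; intros y hy; apply hleft, hy]);
        apply Rmult_lt_0_compat; auto; apply exp_pos.
    - intros t1 ht1 hupto_t1. apply positive_at_extends, hupto_t1. lra. }
  intros ht. destruct (Rle_lt_dec 0 t); [apply hpos; lra | apply hini; lra].
Qed.

Lemma positive_upto_all t1 : positive_upto t1.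
Proof. intros th hth. apply solution_positive. lra. Qed.

Lemma lyap_decrease u v : 0 <= u <= v ->
  exists c0, u <= c0 <= v /\ lyap v <= lyap u - (v - u) * dissipation (T c0) (I c0) (V c0).
Proof. intros huv. apply (lyap_decrease_upto (v + 1)); [apply positive_upto_all | lra | lra]. Qed.

Lemma lyap_le_initial t : 0 <= t -> lyap t <= lyap 0.
Proof. intros ht. apply (lyap_le_initial_upto (t + 1)); [apply positive_upto_all | lra]. Qed.

Definition solution_bound := 2 * (lyap 0 + lyap 0 / kV + T2 + I2 + V2).

Lemma solution_bounded t : 0 <= t ->
  0 < T t <= solution_bound /\ 0 < I t <= solution_bound /\ 0 < V t <= solution_bound.
Proof.
  intros ht. pose proof kV_pos.
  destruct (solution_positive t ltac:(lra)) as [pT [pI pV]].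
  destruct (lyap_ge_parts t t (positive_upto_all t) ltac:(lra)) as [h1 [h2 [h3 h4]]].
  pose proof (lyap_le_initial t ht).
  destruct (lyap_ge_parts 0 0 (positive_upto_all 0) ltac:(lra)) as [_ [_ [_ h0]]].
  assert (0 <= lyap 0 / kV) by (apply Rmult_le_pos; [lra | left; pos]).
  assert (T t <= 2 * (lyap 0 + T2)) by (apply volterra_at_le_upper; auto; lra).
  assert (I t <= 2 * (lyap 0 + I2)) by (apply volterra_at_le_upper; auto; lra).
  assert (V t <= 2 * (lyap 0 / kV + V2)).
  { apply volterra_at_le_upper; auto. apply Rmult_le_reg_l with kV; [lra |].
    replace (kV * (lyap 0 / kV)) with (lyap 0) by (field; lra). lra. }
  unfold solution_bound. repeat split; lra.
Qed.

Lemma converges_of_dissipation (X dX : R -> R) X2 Bd kap :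
  (forall x, tau < x -> is_derive X x (dX x)) -> (forall x, continuous X x) ->
  (forall x, tau <= x -> Rabs (dX x) <= Bd) -> 0 < Bd -> 0 < kap ->
  (forall x, 0 <= x -> kap * (X x - X2) ^ 2 <= dissipation (T x) (I x) (V x)) ->
  forall eps, 0 < eps -> exists M, forall t, M <= t -> Rabs (X t - X2) < eps.
Proof.
  intros hder hcont hbd hBd hkap hQ.
  apply (lyapunov_barbalat lyap X tau X2 Bd kap hBd hkap).
  - intros t ht. apply (lyap_ge_parts t t (positive_upto_all t)). lra.
  - intros u v huv. destruct (lyap_decrease u v ltac:(lra)) as [c0 [hc0 hdec]].
    exists c0. split; [exact hc0 |].
    assert ((v - u) * (kap * (X c0 - X2) ^ 2)
        <= (v - u) * dissipation (T c0) (I c0) (V c0))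
      by (apply Rmult_le_compat_l; [lra | apply hQ; lra]).
    lra.
  - apply (lipschitz_of_derive_bound X dX tau Bd hder hcont hbd).
Qed.

Lemma solution_bound_pos : 0 < solution_bound.
Proof. destruct (solution_bounded 0 ltac:(lra)) as [[h0 hb0] _]. lra. Qed.

Lemma dissipation_along_lower_bounds x : 0 <= x ->
  s / (solution_bound * (T2 + I2)) * (T x - T2) ^ 2 <= dissipation (T x) (I x) (V x) /\
  a / K * (T x + I x - (T2 + I2)) ^ 2 <= dissipation (T x) (I x) (V x) /\
  B2 * al / (V2 * (1 + al * solution_bound) * (1 + al * V2)) * (V x - V2) ^ 2
    <= dissipation (T x) (I x) (V x).
Proof.
  intros hx. destruct (solution_bounded x hx) as [hT [hI hV]].
  apply dissipation_lower_bounds; lra.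
Qed.

Lemma T_tends_to_T2 eps : 0 < eps -> exists N, forall t, N <= t -> Rabs (T t - T2) < eps.
Proof.
  pose proof solution_bound_pos. set (M := solution_bound) in *.
  apply (converges_of_dissipation T (fun x => fT s d a K b al (T x) (I x) (V x)) T2
    (s + d * M + a * M * (1 + 2 * M / K) + b * M * M) (s / (M * (T2 + I2))));
    [| apply hsol | | pos | pos | apply dissipation_along_lower_bounds].
  - intros x hx. apply hsol. lra.
  - intros x hx. destruct (solution_bounded x ltac:(lra)) as [hT [hI hV]].
    apply Rabs_fT_le; auto.
Qed.

Lemma total_tends_to_N2 eps : 0 < eps ->
  exists N, forall t, N <= t -> Rabs ((T t + I t) - (T2 + I2)) < eps.
Proof.
  pose proof solution_bound_pos. set (M := solution_bound) in *.
  apply (converges_of_dissipation (fun t => T t + I t)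
    (fun x => fT s d a K b al (T x) (I x) (V x)
            + fI a K b al d (T (x - tau)) (V (x - tau)) (T x) (I x))
    (T2 + I2) ((s + d * M + a * M * (1 + 2 * M / K) + b * M * M)
              + (b * M * M + a * M * (1 + 2 * M / K) + d * M)) (a / K));
    [| | | pos | pos | apply dissipation_along_lower_bounds].
  - intros x hx. destruct (proj2 hsol x ltac:(lra)) as [dT [dI _]].
    apply (is_derive_plus T I); auto.
  - intros x. destruct (proj1 hsol x) as [cT [cI _]]. apply (continuous_plus T I); auto.
  - intros x hx. destruct (solution_bounded x ltac:(lra)) as [hT [hI hV]].
    destruct (solution_bounded (x - tau) ltac:(lra)) as [hTd [_ hVd]].
    eapply Rle_trans; [apply Rabs_triang |].
    apply Rplus_le_compat; [apply Rabs_fT_le | apply Rabs_fI_le]; auto.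
Qed.

Lemma V_tends_to_V2 eps : 0 < eps -> exists N, forall t, N <= t -> Rabs (V t - V2) < eps.
Proof.
  pose proof solution_bound_pos. pose proof B2_pos. set (M := solution_bound) in *.
  apply (converges_of_dissipation V (fun x => fV p c (I x) (V x)) V2 (p * M + c * M)
    (B2 * al / (V2 * (1 + al * M) * (1 + al * V2))));
    [| apply hsol | | pos | pos | apply dissipation_along_lower_bounds].
  - intros x hx. apply hsol. lra.
  - intros x hx. destruct (solution_bounded x ltac:(lra)) as [_ [hI hV]].
    apply Rabs_fV_le; auto.
Qed.

Lemma solution_tends_to_equilibrium :
  is_lim T p_infty T2 /\ is_lim I p_infty I2 /\ is_lim V p_infty V2.
Proof.
  split; [| split]; apply is_lim_p_infty_of_eps;
    [exact T_tends_to_T2 | | exact V_tends_to_V2].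
  intros eps heps.
  destruct (T_tends_to_T2 (eps / 2) ltac:(lra)) as [N1 h1].
  destruct (total_tends_to_N2 (eps / 2) ltac:(lra)) as [N2 h2].
  exists (Rmax N1 N2). intros t ht.
  specialize (h1 t ltac:(pose proof (Rmax_l N1 N2); lra)).
  specialize (h2 t ltac:(pose proof (Rmax_r N1 N2); lra)).
  replace (I t - I2) with ((T t + I t - (T2 + I2)) - (T t - T2)) by ring.
  eapply Rle_lt_trans; [apply Rabs_triang | rewrite Rabs_Ropp; lra].
Qed.

Lemma lyap_initial_le del : 0 < del <= history_radius ->
  (forall th, - tau <= th <= 0 ->
     Rabs (T th - T2) <= del /\ Rabs (I th - I2) <= del /\ Rabs (V th - V2) <= del) ->
  lyap 0 <= lyap_initial_slope * del.
Proof.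
  intros hdel hclose. destruct history_radius_spec as [_ [h1 [h2 [h3 [h4 _]]]]].
  pose proof ratio_lip_pos. pose proof B2_pos. pose proof kV_pos.
  destruct (hclose 0 ltac:(lra)) as [c1 [c2 c3]].
  pose proof (volterra_at_le_near T2 (T 0) del hT2 ltac:(lra) ltac:(lra) c1).
  pose proof (volterra_at_le_near I2 (I 0) del hI2 ltac:(lra) ltac:(lra) c2).
  pose proof (volterra_at_le_near V2 (V 0) del hV2 ltac:(lra) ltac:(lra) c3).
  assert (hmem : RInt memory_density (- tau) 0 - RInt memory_density (- tau) (0 - tau)
                 <= tau * (2 * ratio_lip ^ 2) * del).
  { replace (0 - tau) with (- tau) by ring.
    rewrite RInt_point. change zero with 0. rewrite Rminus_0_r.
    apply Rle_trans with (RInt (fun _ => 2 * ratio_lip ^ 2 * del) (- tau) 0).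
    - apply RInt_le; [lra | | apply ex_RInt_const |].
      + apply (ex_RInt_continuous (V := R_CompleteNormedModule)). intros z hz.
        apply (memory_density_continuous 0); [apply positive_upto_all | lra |].
        assert (Rmax (- tau) 0 <= 0) by (apply Rmax_lub; lra). lra.
      + intros th hth. rewrite memory_densityE by lra.
        destruct (solution_positive th ltac:(lra)) as [_ [_ pV]].
        destruct (hclose th ltac:(lra)) as [e1 [_ e3]].
        apply volterra_incidence_near; auto; lra.
    - rewrite RInt_const. unfold scal; simpl; unfold mult; simpl. right; ring. }
  assert (kV * volterra_at V2 (V 0) <= kV * (2 / V2 * del)) by (apply Rmult_le_compat_l; lra).
  assert (B2 * (RInt memory_density (- tau) 0 - RInt memory_density (- tau) (0 - tau))
          <= B2 * (tau * (2 * ratio_lip ^ 2) * del)) by (apply Rmult_le_compat_l; lra).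
  unfold lyap, lyap_initial_slope. nra.
Qed.

End Solution.

Lemma equilibrium_globally_attractive : globally_attractive s d a K b al d p c tau T2 I2 V2.
Proof. intros T I V hsol hini. apply solution_tends_to_equilibrium; auto. Qed.

Lemma lyap_initial_slope_pos : 0 < lyap_initial_slope.
Proof.
  pose proof ratio_lip_pos. pose proof B2_pos. pose proof kV_pos.
  assert (0 <= B2 * (tau * (2 * ratio_lip ^ 2)))
    by (apply Rmult_le_pos; [lra | apply Rmult_le_pos; [lra | nra]]).
  assert (0 < 2 / T2 + 2 / I2 + kV * (2 / V2)) by pos.
  unfold lyap_initial_slope. lra.
Qed.

Lemma equilibrium_locally_stable : locally_stable s d a K b al d p c tau T2 I2 V2.
Proof.
  intros eps heps. pose proof kV_pos. pose proof lyap_initial_slope_pos.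
  destruct (volterra_at_small_close T2 eps hT2 heps) as [eT [heT HT]].
  destruct (volterra_at_small_close I2 eps hI2 heps) as [eI [heI HI]].
  destruct (volterra_at_small_close V2 eps hV2 heps) as [eV [heV HV]].
  set (eta := Rmin eT (Rmin eI (kV * eV))).
  assert (heta : 0 < eta) by (unfold eta; repeat apply Rmin_glb_lt; pos).
  assert (eta <= eT /\ eta <= eI /\ eta <= kV * eV).
  { pose proof (Rmin_l eT (Rmin eI (kV * eV))). pose proof (Rmin_r eT (Rmin eI (kV * eV))).
    pose proof (Rmin_l eI (kV * eV)). pose proof (Rmin_r eI (kV * eV)). unfold eta. lra. }
  destruct history_radius_spec as [hdel0 _].
  set (delta := Rmin history_radius (eta / (lyap_initial_slope + 1))).
  assert (hdelta : 0 < delta <= history_radius /\ delta <= eta / (lyap_initial_slope + 1)).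
  { unfold delta. repeat split; [apply Rmin_glb_lt; pos | apply Rmin_l | apply Rmin_r]. }
  exists delta. split; [lra |].
  intros T I V hsol hini hclose t ht.
  assert (hL0 : lyap T I V 0 <= lyap_initial_slope * delta).
  { apply lyap_initial_le; auto; [lra |]. intros th hth.
    destruct (proj1 (dist3_lt _ _ _ _ _ _ _) (hclose th hth)) as [h1 [h2 h3]]. lra. }
  assert (hKd : lyap_initial_slope * delta < eta).
  { apply Rle_lt_trans with (lyap_initial_slope * (eta / (lyap_initial_slope + 1))); [apply Rmult_le_compat_l; lra |].
    apply Rmult_lt_reg_r with (lyap_initial_slope + 1); [lra |].
    replace (lyap_initial_slope * (eta / (lyap_initial_slope + 1)) * (lyap_initial_slope + 1)) with (lyap_initial_slope * eta) by (field; lra). nra. }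
  pose proof (lyap_le_initial T I V hsol hini t ht).
  destruct (solution_positive T I V hsol hini t ltac:(lra)) as [pT [pI pV]].
  destruct (lyap_ge_parts T I V hsol t t (positive_upto_all T I V hsol hini t)
    ltac:(lra)) as [b1 [b2 [b3 _]]].
  apply dist3_lt. split; [| split].
  - apply HT; [exact pT | lra].
  - apply HI; [exact pI | lra].
  - apply HV; [exact pV |]. apply Rmult_lt_reg_l with kV; lra.
Qed.

End Stability.

Theorem corollary1 (s d a Tmax b alpha mu p c tau : R)
  (hs : 0 < s) (hd : 0 < d) (ha : 0 < a) (hTmax : 0 < Tmax) (hb : 0 < b)
  (halpha : 0 < alpha) (hmu : 0 < mu) (hp : 0 < p) (hc : 0 < c) (htau : 0 <= tau)
  (hdmu : d = mu) (hR0 : 1 < basic_R0 s d a Tmax b mu p c) :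
  exists T2 I2 V2 : R,
    0 < T2 /\ 0 < I2 /\ 0 < V2 /\
    is_equilibrium s d a Tmax b alpha mu p c T2 I2 V2 /\
    (forall T' I' V' : R, 0 < T' -> 0 < I' -> 0 < V' ->
       is_equilibrium s d a Tmax b alpha mu p c T' I' V' ->
       T' = T2 /\ I' = I2 /\ V' = V2) /\
    globally_asymptotically_stable s d a Tmax b alpha mu p c tau T2 I2 V2.
Proof.
  subst mu.
  destruct (infected_equilibrium s d a Tmax b alpha p c hs hd ha hTmax hb halpha hp hc hR0)
    as [T2 [I2 [V2 [hT2 [hI2 [hV2 [hE huniq]]]]]]].
  exists T2, I2, V2.
  do 5 (split; [assumption |]).
  split; [apply equilibrium_locally_stable | apply equilibrium_globally_attractive]; assumption.
Qed.
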